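(* For each $\sigma\in\mathfrak S(r)$, the $R$-linear map $\mathcal H_{n,r}\to\mathcal H_{n,r}$ defined on the basis $\{b_{\mathbf k}g_w\}$ by $b_{k_1,\ldots,k_n}g_w\mapsto b_{\sigma(k_1),\ldots,\sigma(k_n)}g_w$ (so that ${}^\sigma b_{\mathbf k}=b_{\sigma(k_1),\ldots,\sigma(k_n)}$ and ${}^\sigma g_w=g_w$) is an $R$-algebra automorphism of $\mathcal H_{n,r}$; these automorphisms define an action of $\mathfrak S(r)$ on $\mathcal H_{n,r}$ by $R$-algebra automorphisms.
   Context: Standing setup: $R$ is an integral domain, $n\ge 1$, $r\ge 1$, and $q,u_1,\ldots,u_r\in R$ with $q$ invertible in $R$ and $\Delta:=\prod_{1\le j<i\le r}(u_i-u_j)$ invertible in $R$. For $1\le c\le r$ let $F_c(X)\in R[X]$ be the unique polynomial of degree $\le r-1$ with $F_c(u_{c'})=\delta_{c,c'}\Delta$ for all $1\le c'\le r$. The modified Ariki–Koike (Shoji) algebra $\mathcal H_{n,r}=\mathcal H_{n,r}(R,q,u_1,\ldots,u_r)$ is the associative $R$-algebra generated by $t_1,\ldots,t_n,T_1,\ldots,T_{n-1}$ subject to: $(T_i-q)(T_i+q^{-1})=0$; $(t_i-u_1)\cdots(t_i-u_r)=0$; $T_iT_{i+1}T_i=T_{i+1}T_iT_{i+1}$; $T_iT_j=T_jT_i$ for $|i-j|\ge2$; $t_it_j=t_jt_i$; $T_jt_k=t_kT_j$ for $k\ne j,j+1$; and for $2\le j\le n$: $T_{j-1}t_j=t_{j-1}T_{j-1}+\Delta^{-2}\sum_{1\le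 c_1<c_2\le r}(u_{c_2}-u_{c_1})(q-q^{-1})F_{c_1}(t_{j-1})F_{c_2}(t_j)$ and $T_{j-1}t_{j-1}=t_jT_{j-1}-\Delta^{-2}\sum_{1\le c_1<c_2\le r}(u_{c_2}-u_{c_1})(q-q^{-1})F_{c_1}(t_{j-1})F_{c_2}(t_j)$. Write $[1,r]=\{1,\ldots,r\}$; $b_{\mathbf k}:=\prod_{i=1}^n\prod_{1\le j\le r,\,j\ne k_i}\frac{t_i-u_j}{u_{k_i}-u_j}$ for $\mathbf k\in[1,r]^n$; $B'_{i,j}:=-(q-q^{-1})\sum_{\mathbf k,\ k_i<k_j}b_{\mathbf k}$; $g_i:=T_i+B'_{i,i+1}$; for $w\in\mathfrak S(n)$ with reduced expression $s_{i_1}\cdots s_{i_l}$, $g_w:=g_{i_1}\cdots g_{i_l}$ (well defined). The set $\{b_{\mathbf k}g_w:\mathbf k\in[1,r]^n,w\in\mathfrak S(n)\}$ is an $R$-basis of $\mathcal H_{n,r}$. *)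

From HB Require Import structures.
From mathcomp Require Import all_boot all_order all_fingroup all_algebra.
Set Implicit Arguments. Unset Strict Implicit. Unset Printing Implicit Defensive.
Import GRing.Theory.
Local Open Scope ring_scope.

(* Conventions: t_1..t_n and T_1..T_(n-1) are indexed by nat, 1-based as in the
   paper (values at other indices are irrelevant).  The parameters u_1..u_r are
   indexed by 'I_r (0-based: u c for c : 'I_r stands for u_(c+1)).  Elements
   k of [1,r]^n are tuples k : n.-tuple 'I_r, with k_i = tnth k (i-1). *)

Section Shoji.
Variables (R : idomainType) (n r : nat) (q : R) (u : 'I_r -> R)
          (F : 'I_r -> {poly R}).

Definition Delta : R := \prod_(j < r) \prod_(i < r | (j < i)%N) (u i - u j).

Section InAlg.
Variable A : algType R.

Definition peval (p : {poly R}) (x : A) : A := \sum_(i < size p) p`_i *: x ^+ i.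

Definition corr (x y : A) : A :=
  \sum_(c1 < r) \sum_(c2 < r | (c1 < c2)%N)
     ((Delta ^- 2 * (u c2 - u c1) * (q - q^-1)) *: (peval (F c1) x * peval (F c2) y)).

Definition shoji_rel (t T : nat -> A) : Prop :=
  (forall i, (1 <= i <= n.-1)%N -> (T i - q%:A) * (T i + q^-1%:A) = 0) /\
      (forall i, (1 <= i <= n)%N -> \prod_(c < r) (t i - (u c)%:A) = 0) /\
      (forall i, (1 <= i)%N -> (i.+1 <= n.-1)%N ->
          T i * T i.+1 * T i = T i.+1 * T i * T i.+1) /\
      (forall i j, (1 <= i <= n.-1)%N -> (1 <= j <= n.-1)%N -> (i.+1 < j)%N || (j.+1 < i)%N ->
          T i * T j = T j * T i) /\
      (forall i j, (1 <= i <= n)%N -> (1 <= j <= n)%N -> t i * t j = t j * t i) /\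
      (forall j k, (1 <= j <= n.-1)%N -> (1 <= k <= n)%N -> k != j -> k != j.+1 ->
          T j * t k = t k * T j) /\
      (forall j, (2 <= j <= n)%N ->
          T j.-1 * t j = t j.-1 * T j.-1 + corr (t j.-1) (t j) /\
          T j.-1 * t j.-1 = t j * T j.-1 - corr (t j.-1) (t j)).
End InAlg.

(* (A, t, T) is a presentation of H_{n,r}: universal among R-algebras with
   elements satisfying the relations. *)
Definition shoji_universal (A : algType R) (t T : nat -> A) : Prop :=
  shoji_rel t T /\
  forall (B : algType R) (tB TB : nat -> B), shoji_rel tB TB ->
    exists f : {lrmorphism A -> B},
      [/\ (forall i, (1 <= i <= n)%N -> f (t i) = tB i),
          (forall i, (1 <= i <= n.-1)%N -> f (T i) = TB i) &
          forall g : {lrmorphism A -> B},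
            (forall i, (1 <= i <= n)%N -> g (t i) = tB i) ->
            (forall i, (1 <= i <= n.-1)%N -> g (T i) = TB i) -> g =1 f].

Section Elements.
Variables (A : algType R) (t T : nat -> A).

Definition bk (k : n.-tuple 'I_r) : A :=
  \prod_(i < n) \prod_(j < r | j != tnth k i)
     ((u (tnth k i) - u j)^-1 *: (t i.+1 - (u j)%:A)).

(* k_i as a natural number (1-based i); only used for comparisons k_i < k_j *)
Definition kv (k : n.-tuple 'I_r) (i : nat) : nat := nth 0%N (map val k) i.-1.

Definition Bp (i j : nat) : A :=
  - (q - q^-1) *: \sum_(k : n.-tuple 'I_r | (kv k i < kv k j)%N) bk k.

Definition gi (i : nat) : A := T i + Bp i i.+1.

Definition gword (s : seq nat) : A := \prod_(i <- s) gi i.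
End Elements.
End Shoji.

(* simple reflection s_i (1 <= i <= n-1) acting on {0,...,n-1} = 'I_n
   (positions i-1 and i, 0-based, i.e. i and i+1, 1-based) *)
Definition sref (n : nat) (i : nat) (j : 'I_n) : 'I_n :=
  insubd j (if val j == i.-1 then i else if val j == i then i.-1 else val j).

Definition wfun (n : nat) (s : seq nat) (j : 'I_n) : 'I_n :=
  foldr (fun i x => sref i x) j s.

Definition expr_of (n : nat) (s : seq nat) (w : 'S_n) : Prop :=
  all (fun i => (0 < i < n)%N) s /\ forall j, w j = wfun s j.

Definition reduced_expr (n : nat) (s : seq nat) (w : 'S_n) : Prop :=
  expr_of s w /\ forall s', expr_of s' w -> (size s <= size s')%N.

From HB Require Import structures.
From mathcomp Require Import all_boot all_order all_fingroup all_algebra.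
From mathcomp Require Import ring zify.
From Stdlib Require Import ClassicalEpsilon.
Set Implicit Arguments. Unset Strict Implicit. Unset Printing Implicit Defensive.
Import GRing.Theory.
Local Open Scope ring_scope.

(* The b_k are orthogonal idempotents with sum 1, t_i acts on b_k by the
   scalar u_(k_i), and g_j b_k = b_(s_j k) g_j.  Hence
     t_i = \sum_k u_(k_i) b_k,   T_j = g_j + (q - q^-1) \sum_(k_j < k_(j+1)) b_k.
   Relabelling the colours by v in these formulas (u_(v k_i), v k_j < v k_(j+1))
   gives new elements t'_i, T'_j.  Each relation among the T'_j is equivalent to
   a relation among the g_j that does not involve v (only the equalities
   k_j = k_(j+1) enter), so it holds because it holds for v = 1, where T'_j = T_j;
   the mixed relations are checked on the idempotents.  Universality then yields
   an endomorphism fixing every g_j and sending b_k to b_(v^-1 k), and uniqueness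
   turns sigma |-> (this endomorphism for v = sigma^-1) into an action. *)

Section LagrangeBasis.
Variables (R : idomainType) (r : nat) (u : 'I_r -> R).
Hypothesis u_diff_unit : forall a b, a != b -> u a - u b \is a GRing.unit.

Definition lagrange_poly (a : 'I_r) : {poly R} :=
  \prod_(j < r | j != a) ((u a - u j)^-1 *: ('X - (u j)%:P)).

Lemma lagrange_poly_node a b : (lagrange_poly a).[u b] = (a == b)%:R.
Proof.
rewrite /lagrange_poly horner_prod; case: (eqVneq a b) => [<-|ab].
  by rewrite big1 // => j ja; rewrite hornerZ hornerXsubC mulVr // u_diff_unit // eq_sym.
by rewrite (bigD1 b) 1?eq_sym //= hornerZ hornerXsubC subrr mulr0 mul0r.
Qed.

Lemma sum_lagrange_poly_mod :
  exists Q, 1 - \sum_a lagrange_poly a = Q * \prod_(a < r) ('X - (u a)%:P).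
Proof.
have roots : all (root (1 - \sum_a lagrange_poly a)) (map u (enum 'I_r)).
  apply/allP => _ /mapP[b _ ->]; rewrite /root hornerD hornerN hornerC horner_sum.
  rewrite (bigD1 b) //= big1 ?lagrange_poly_node ?eqxx ?addr0 ?subrr // => a ab.
  by rewrite lagrange_poly_node (negbTE ab).
have uniq_u : uniq_roots (map u (enum 'I_r)).
  elim: (enum 'I_r) (enum_uniq 'I_r) => //= a s IHs /andP[as_ us].
  rewrite IHs // andbT; apply/allP => _ /mapP[b bs ->].
  rewrite /diff_roots mulrC eqxx u_diff_unit //.
  by apply: contraNN as_ => /eqP <-.
have [Q ->] := uniq_roots_prod_XsubC roots uniq_u.
by exists Q; rewrite big_map big_enum.
Qed.

End LagrangeBasis.

Section PolynomialsInAlgebras.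
Variables (R : comNzRingType) (A : algType R).

Lemma horner_alg_eigen (x y : A) c p :
  x * y = c *: y -> horner_alg x p * y = p.[c] *: y.
Proof.
move=> xy; elim/poly_ind: p => [|p a IHp]; first by rewrite rmorph0 mul0r horner0 scale0r.
rewrite rmorphD rmorphM /= horner_algX horner_algC mulrDl -mulrA xy -scalerAr IHp.
by rewrite scalerA mulr_algl -scalerDl hornerMXaddC mulrC.
Qed.

Lemma comm_horner_alg (x y : A) p : GRing.comm x y -> GRing.comm x (horner_alg y p).
Proof.
move=> xy; elim/poly_ind: p => [|p a IHp]; first by rewrite rmorph0; apply: commr0.
rewrite rmorphD rmorphM /= horner_algX horner_algC.
by apply: commrD; [apply: commrM | apply/commr_sym/comm_alg].
Qed.

Lemma lrmorph_horner_alg (f : {lrmorphism A -> A}) x p :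
  f (horner_alg x p) = horner_alg (f x) p.
Proof.
elim/poly_ind: p => [|p a IHp]; first by rewrite !rmorph0.
by rewrite !rmorphD !rmorphM /= !horner_algX !horner_algC IHp rmorph_alg.
Qed.

End PolynomialsInAlgebras.

Section SpectralIdempotents.
Variables (R : idomainType) (r : nat) (u : 'I_r -> R) (A : algType R) (x : A).
Hypotheses (u_diff_unit : forall a b, a != b -> u a - u b \is a GRing.unit)
           (x_split : \prod_(c < r) (x - (u c)%:A) = 0).

Definition spectral_idem (a : 'I_r) : A := horner_alg x (lagrange_poly u a).

Lemma horner_alg_split : horner_alg x (\prod_(c < r) ('X - (u c)%:P)) = 0.
Proof.
by rewrite rmorph_prod -x_split; apply: eq_bigr => c _; rewrite rmorphB /= horner_algX horner_algC.
Qed.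

Lemma sum_spectral_idem : \sum_a spectral_idem a = 1.
Proof.
have [Q EQ] := sum_lagrange_poly_mod u_diff_unit.
move/(congr1 (horner_alg x)): EQ.
rewrite rmorphM /= horner_alg_split mulr0 rmorphB rmorph1 rmorph_sum /= => /eqP.
by rewrite subr_eq0 => /eqP <-.
Qed.

Lemma mul_spectral_idem a : x * spectral_idem a = u a *: spectral_idem a.
Proof.
apply/eqP; rewrite -subr_eq0 -mulr_algl -mulrBl.
have -> : x - (u a)%:A = horner_alg x ('X - (u a)%:P).
  by rewrite rmorphB /= horner_algX horner_algC.
rewrite /spectral_idem -rmorphM /lagrange_poly scaler_prod -scalerAr.
have <- : \prod_(c < r) ('X - (u c)%:P)
          = ('X - (u a)%:P) * \prod_(j < r | j != a) ('X - (u j)%:P) by rewrite (bigD1 a).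
by rewrite -mul_polyC rmorphM /= horner_alg_split mulr0.
Qed.

End SpectralIdempotents.

Section IdempotentCombinations.
Variables (R : comNzRingType) (A : algType R) (I : finType) (e : I -> A).
Hypotheses (e_mul : forall i j, e i * e j = (i == j)%:R *: e j)
           (sum_e : \sum_i e i = 1).

Definition diag (f : I -> R) : A := \sum_i f i *: e i.

Lemma eq_diag f g : f =1 g -> diag f = diag g.
Proof. by move=> fg; apply: eq_bigr => i _; rewrite fg. Qed.

Lemma diag_mul_idem f j : diag f * e j = f j *: e j.
Proof.
rewrite /diag mulr_suml (bigD1 j) //= big1 ?addr0 => [|i ij].
  by rewrite -scalerAl e_mul eqxx scale1r.
by rewrite -scalerAl e_mul (negbTE ij) scale0r scaler0.
Qed.

Lemma idem_mul_diag f j : e j * diag f = f j *: e j.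
Proof.
rewrite /diag mulr_sumr (bigD1 j) //= big1 ?addr0 => [|i ij].
  by rewrite -scalerAr e_mul eqxx scale1r.
by rewrite -scalerAr e_mul eq_sym (negbTE ij) !scale0r scaler0.
Qed.

Lemma diag_idem j : diag (fun i => (i == j)%:R) = e j.
Proof.
rewrite /diag (bigD1 j) //= big1 ?addr0 ?eqxx ?scale1r // => i ij.
by rewrite (negbTE ij) scale0r.
Qed.

Lemma diagM f g : diag f * diag g = diag (fun i => f i * g i).
Proof.
rewrite {2}/diag mulr_sumr; apply: eq_bigr => i _.
by rewrite -scalerAr diag_mul_idem scalerA mulrC.
Qed.

Lemma diagD f g : diag f + diag g = diag (fun i => f i + g i).
Proof. by rewrite /diag -big_split; apply: eq_bigr => i _; rewrite scalerDl. Qed.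

Lemma diagN f : - diag f = diag (fun i => - f i).
Proof. by rewrite /diag -sumrN; apply: eq_bigr => i _; rewrite scaleNr. Qed.

Lemma diagZ a f : a *: diag f = diag (fun i => a * f i).
Proof. by rewrite /diag scaler_sumr; apply: eq_bigr => i _; rewrite scalerA. Qed.

Lemma diagC a : diag (fun=> a) = a%:A.
Proof. by rewrite /diag -scaler_sumr sum_e. Qed.

Lemma diag1 : diag (fun=> 1) = 1.
Proof. by rewrite diagC scale1r. Qed.

Lemma diag0 : diag (fun=> 0) = 0.
Proof. by rewrite /diag big1 // => i _; rewrite scale0r. Qed.

Lemma diag_sum (J : Type) (s : seq J) (P : pred J) (G : J -> I -> R) :
  \sum_(j <- s | P j) diag (G j) = diag (fun i => \sum_(j <- s | P j) G j i).
Proof. by rewrite /diag exchange_big; apply: eq_bigr => i _; rewrite scaler_suml. Qed.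

Lemma diag_prod (J : Type) (s : seq J) (P : pred J) (G : J -> I -> R) :
  \prod_(j <- s | P j) diag (G j) = diag (fun i => \prod_(j <- s | P j) G j i).
Proof.
elim: s => [|j s IHs]; first by rewrite big_nil -diag1; apply: eq_diag => i; rewrite big_nil.
rewrite big_cons IHs; case: ifP => Pj; last by apply: eq_diag => i; rewrite big_cons Pj.
by rewrite diagM; apply: eq_diag => i; rewrite big_cons Pj.
Qed.

Lemma horner_alg_diag f p : horner_alg (diag f) p = diag (fun i => p.[f i]).
Proof.
elim/poly_ind: p => [|p a IHp].
  by rewrite rmorph0 -diag0; apply: eq_diag => i; rewrite horner0.
rewrite rmorphD rmorphM /= horner_algX horner_algC IHp diagM -diagC diagD.
by apply: eq_diag => i; rewrite hornerMXaddC.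
Qed.

(* Normal forms [\sum_m diag (G m) * ws`_m] over a list [ws] of monomials:
   identities between such expressions reduce to pointwise identities in [R]. *)
Definition dcomb (ws : seq A) (G : nat -> I -> R) : A :=
  \sum_(m < size ws) diag (G m) * ws`_m.

Definition slot (m : nat) (f : I -> R) : nat -> I -> R :=
  fun m' i => if m' == m then f i else 0.

Lemma dcombD ws G H : dcomb ws G + dcomb ws H = dcomb ws (fun m i => G m i + H m i).
Proof. by rewrite /dcomb -big_split; apply: eq_bigr => m _ /=; rewrite -mulrDl diagD. Qed.

Lemma dcombN ws G : - dcomb ws G = dcomb ws (fun m i => - G m i).
Proof. by rewrite /dcomb -sumrN; apply: eq_bigr => m _; rewrite -mulNr diagN. Qed.

Lemma eq_dcomb ws G H :
  (forall m i, (m < size ws)%N -> G m i = H m i) -> dcomb ws G = dcomb ws H.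
Proof. by move=> GH; apply: eq_bigr => m _; congr (_ * _); apply: eq_diag => i; apply: GH. Qed.

Lemma dcomb_slot ws m f : (m < size ws)%N -> diag f * ws`_m = dcomb ws (slot m f).
Proof.
move=> lt_m; rewrite /dcomb (bigD1 (Ordinal lt_m)) //= big1 ?addr0 => [|m' m'm].
  by congr (_ * _); apply: eq_diag => i; rewrite /slot eqxx.
rewrite (_ : diag _ = 0) ?mul0r // -diag0; apply: eq_diag => i.
by rewrite /slot; case: eqP => // E; rewrite -val_eqE /= E eqxx in m'm.
Qed.

Lemma dcomb_slot1 ws m : (m < size ws)%N -> ws`_m = dcomb ws (slot m (fun=> 1)).
Proof. by move=> lt_m; rewrite -dcomb_slot // diag1 mul1r. Qed.

End IdempotentCombinations.

Arguments dcomb_slot {R A I} e ws m f.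
Arguments dcomb_slot1 {R A I e} sum_e ws m.

Section EigenProducts.
Variables (R : comNzRingType) (A : algType R).

Lemma mul_prod_eigen (J : eqType) (s : seq J) (Y : J -> A) x j a :
  j \in s -> (forall i, GRing.comm x (Y i)) -> x * Y j = a *: Y j ->
  x * \prod_(i <- s) Y i = a *: \prod_(i <- s) Y i.
Proof.
move=> + xY xYj; elim: s => //= i s IHs; rewrite inE big_cons.
case: eqP => [<- _|_ /IHs xs]; first by rewrite mulrA xYj -scalerAl.
by rewrite mulrA xY -mulrA xs scalerAr.
Qed.

Lemma prod_mul_eigen (J : Type) (s : seq J) (Y : J -> A) (a : J -> R) y :
  (forall i, Y i * y = a i *: y) -> (\prod_(i <- s) Y i) * y = (\prod_(i <- s) a i) *: y.
Proof.
move=> Yy; apply: (big_rec2 (fun Z a => Z * y = a *: y)); first by rewrite mul1r scale1r.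
by move=> i Z b _ Zy; rewrite -mulrA Zy -scalerAr Yy scalerA mulrC.
Qed.

End EigenProducts.

Lemma peval_horner_alg (R : idomainType) (A : algType R) (p : {poly R}) (x : A) :
  peval p x = horner_alg x p.
Proof.
rewrite /peval -[in RHS](coefK p) poly_def linear_sum; apply: eq_bigr => i _.
by rewrite -mul_polyC rmorphM /= horner_algC rmorphXn /= horner_algX mulr_algl.
Qed.

Lemma scaler_unit_eq0 (R : comUnitRingType) (V : lmodType R) (a : R) (x : V) :
  a \is a GRing.unit -> a *: x = 0 -> x = 0.
Proof. by move=> ua ax0; rewrite -[x]scale1r -(mulVr ua) -scalerA ax0 scaler0. Qed.

Lemma hecke_quadratic_expand (R : comUnitRingType) (A : algType R) (q : R) (X : A) :
  q \is a GRing.unit -> (X - q%:A) * (X + q^-1%:A) = X * X - (q - q^-1) *: X - 1.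
Proof.
move=> q_unit; rewrite mulrDr !mulrBl !mulr_algr !mulr_algl scalerA mulVr // scale1r.
by rewrite scalerBl opprB addrA; congr (_ - _); rewrite addrAC -addrA.
Qed.

Lemma Delta_unit_diff (R : idomainType) (r : nat) (u : 'I_r -> R) :
  Delta u \is a GRing.unit -> forall a b, a != b -> u a - u b \is a GRing.unit.
Proof.
move=> uD; have lt_unit (i j : 'I_r) : (j < i)%N -> u i - u j \is a GRing.unit.
  move=> ji; move/unitr_prodP: uD => /(_ j (mem_index_enum _) isT).
  by move/unitr_prodP => /(_ i (mem_index_enum _) ji).
move=> a b ab; case: (ltngtP a b) => [lt_ab|lt_ba|eq_ab].
- by rewrite -opprB unitrN lt_unit.
- exact: lt_unit.
- by rewrite (val_inj eq_ab) eqxx in ab.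
Qed.

(* Positions of tuples are 0-based: [swap_index j] exchanges [j.-1] and [j],
   i.e. the entries [k_j] and [k_(j+1)] in the 1-based notation of the paper. *)
Section AdjacentSwap.
Variables (n : nat) (X : eqType) (x0 : X).

Definition swap_index (j p : nat) : nat :=
  if p == j.-1 then j else if p == j then j.-1 else p.

Definition tswap (j : nat) (k : n.-tuple X) : n.-tuple X :=
  [tuple nth x0 k (swap_index j p) | p < n].

Lemma swap_index_lo j : swap_index j j.-1 = j.
Proof. by rewrite /swap_index eqxx. Qed.

Lemma swap_index_hi j : (0 < j)%N -> swap_index j j = j.-1.
Proof. by move=> j_gt0; rewrite /swap_index eqxx; case: eqP => //; lia. Qed.

Lemma swap_index_out j p : p != j.-1 -> p != j -> swap_index j p = p.
Proof. by rewrite /swap_index => /negbTE-> /negbTE->. Qed.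

Lemma swap_indexK j : (0 < j)%N -> involutive (swap_index j).
Proof. by move=> j_gt0 p; rewrite /swap_index; do ![case: eqP]; lia. Qed.

Lemma nth_tswap j k p : (0 < j < n)%N -> nth x0 (tswap j k) p = nth x0 k (swap_index j p).
Proof.
move=> /andP[j_gt0 lt_jn]; case: (ltnP p n) => [lt_pn|le_np].
  by rewrite -(tnth_nth x0 _ (Ordinal lt_pn)) tnth_mktuple.
rewrite swap_index_out; try by apply/eqP; lia.
by rewrite !nth_default ?size_tuple.
Qed.

Lemma tswapK j : (0 < j < n)%N -> involutive (tswap j).
Proof.
move=> lt_j k; apply/val_inj/(@eq_from_nth _ x0); rewrite ?size_tuple // => p _.
by rewrite !nth_tswap // swap_indexK //; case/andP: lt_j.
Qed.

Lemma tuple_neq_nth (k l : n.-tuple X) :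
  k != l -> exists2 p, (p < n)%N & nth x0 k p != nth x0 l p.
Proof.
move=> kl; have: ~~ [forall p : 'I_n, nth x0 k p == nth x0 l p].
  apply: contra kl => /forallP kl; apply/eqP/eq_from_tnth => p.
  by rewrite !(tnth_nth x0); apply/eqP.
by rewrite negb_forall => /existsP[p kl_p]; exists p.
Qed.

End AdjacentSwap.

Lemma eq_perm_val (r : nat) (v : {perm 'I_r}) (a a' : 'I_r) : (a == a') = (v a == v a' :> nat).
Proof. by rewrite val_eqE (inj_eq perm_inj). Qed.

(* In the Shoji algebra [e = b], [g j = g_j] and [twist 1 j = T_j]; [twist v j]
   is the image of [T_j] after relabelling the colours by [v]. *)
Section TwistedGenerators.
Variables (R : comNzRingType) (A : algType R) (n r' : nat) (c : R).
Local Notation r := r'.+1.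
Local Notation K := (n.-tuple 'I_r).
Local Notation entry k p := (nth ord0 k p).
Variables (e : K -> A) (g : nat -> A).
Hypotheses (e_mul : forall k l, e k * e l = (k == l)%:R *: e l) (sum_e : \sum_k e k = 1)
  (g_diag : forall j f, (0 < j < n)%N ->
     g j * diag e f = diag e (fun k => f (tswap ord0 j k)) * g j).
Local Notation diage := (diag e).

Definition ascent (v : {perm 'I_r}) j (k : K) : bool := (v (entry k j.-1) < v (entry k j))%N.

Definition tie j (k : K) : R := c * (entry k j.-1 == entry k j)%:R.

Definition twist (v : {perm 'I_r}) j : A := g j + diage (fun k => c * (ascent v j k)%:R).

Lemma ascent_tswap v j (k : K) : (0 < j < n)%N ->
  ascent v j (tswap ord0 j k) = (v (entry k j) < v (entry k j.-1))%N.
Proof. by move=> lt_j; rewrite /ascent !nth_tswap // swap_index_lo swap_index_hi //; lia. Qed.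

Lemma g_diag_mul j f X : (0 < j < n)%N ->
  g j * (diage f * X) = diage (fun k => f (tswap ord0 j k)) * (g j * X).
Proof. by move=> lt_j; rewrite mulrA g_diag // mulrA. Qed.

Lemma diag_diag_mul f h X : diage f * (diage h * X) = diage (fun k => f k * h k) * X.
Proof. by rewrite mulrA (diagM e_mul). Qed.

Lemma scale_diag a X : a *: X = diage (fun=> a) * X.
Proof. by rewrite (diagC sum_e) mulr_algl. Qed.

Lemma twist_mul_diag v j f : (0 < j < n)%N ->
  twist v j * diage f = diage (fun k => f (tswap ord0 j k)) * twist v j
    + diage (fun k => c * (ascent v j k)%:R * (f k - f (tswap ord0 j k))).
Proof.
move=> lt_j; rewrite /twist mulrDl mulrDr g_diag // !(diagM e_mul) -addrA diagD.
by congr (_ + _); apply: eq_diag => k; ring.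
Qed.

Lemma twist_quadratic_transfer v j : (0 < j < n)%N ->
  twist v j * twist v j - c *: twist v j - 1 = g j * g j - diage (tie j) * g j - 1.
Proof.
move=> lt_j; pose ws := [:: 1; g j; g j * g j].
have S0 f : diage f = dcomb e ws (slot 0 f) by rewrite -dcomb_slot ?mulr1.
have S1 f : diage f * g j = dcomb e ws (slot 1 f) := dcomb_slot e ws 1 f isT.
have S2 f : diage f * (g j * g j) = dcomb e ws (slot 2 f) := dcomb_slot e ws 2 f isT.
have P0 : 1 = dcomb e ws (slot 0 (fun=> 1)) := dcomb_slot1 sum_e ws 0 isT.
have P1 : g j = dcomb e ws (slot 1 (fun=> 1)) := dcomb_slot1 sum_e ws 1 isT.
have P2 : g j * g j = dcomb e ws (slot 2 (fun=> 1)) := dcomb_slot1 sum_e ws 2 isT.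
rewrite /twist scale_diag.
rewrite ?(mulrDl, mulrDr, mulrBl, mulrBr, mulNr, mulrN, opprK, mulr1, mul1r,
          (esym (mulrA _ _ _)), g_diag_mul _ _ lt_j, g_diag _ lt_j, (diagM e_mul), diag_diag_mul).
rewrite ?S2 ?S1 ?P2 ?P1 ?S0 P0 ?(dcombN, dcombD); apply: eq_dcomb => m k.
case: m => [|[|[|m]]] // _; rewrite /slot /= /tie ?ascent_tswap // /ascent ?(eq_perm_val v);
  move: (nat_of_ord (v (entry k j.-1))) (nat_of_ord (v (entry k j))) => x y;
  by case: (ltngtP x y) => _ /=; ring.
Qed.

Lemma twist_comm_transfer v i j : (0 < i < n)%N -> (0 < j < n)%N ->
  (i.+1 < j)%N || (j.+1 < i)%N ->
  twist v i * twist v j - twist v j * twist v i = g i * g j - g j * g i.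
Proof.
move=> lt_i lt_j far.
have sw_ij1 : swap_index i j.-1 = j.-1 by apply: swap_index_out; lia.
have sw_ij : swap_index i j = j by apply: swap_index_out; lia.
have sw_ji1 : swap_index j i.-1 = i.-1 by apply: swap_index_out; lia.
have sw_ji : swap_index j i = i by apply: swap_index_out; lia.
pose ws := [:: 1; g i; g j; g i * g j; g j * g i].
have S0 f : diage f = dcomb e ws (slot 0 f) by rewrite -dcomb_slot ?mulr1.
have S1 f : diage f * g i = dcomb e ws (slot 1 f) := dcomb_slot e ws 1 f isT.
have S2 f : diage f * g j = dcomb e ws (slot 2 f) := dcomb_slot e ws 2 f isT.
have S3 f : diage f * (g i * g j) = dcomb e ws (slot 3 f) := dcomb_slot e ws 3 f isT.
have S4 f : diage f * (g j * g i) = dcomb e ws (slot 4 f) := dcomb_slot e ws 4 f isT.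
have P1 : g i = dcomb e ws (slot 1 (fun=> 1)) := dcomb_slot1 sum_e ws 1 isT.
have P2 : g j = dcomb e ws (slot 2 (fun=> 1)) := dcomb_slot1 sum_e ws 2 isT.
have P3 : g i * g j = dcomb e ws (slot 3 (fun=> 1)) := dcomb_slot1 sum_e ws 3 isT.
have P4 : g j * g i = dcomb e ws (slot 4 (fun=> 1)) := dcomb_slot1 sum_e ws 4 isT.
rewrite /twist.
rewrite ?(mulrDl, mulrDr, mulrBl, mulrBr, mulNr, mulrN, opprK, mulr1, mul1r,
          (esym (mulrA _ _ _)), g_diag_mul _ _ lt_i, g_diag _ lt_i,
          g_diag_mul _ _ lt_j, g_diag _ lt_j, (diagM e_mul), diag_diag_mul).
rewrite ?S4 ?S3 ?S2 ?S1 ?P4 ?P3 ?P2 ?P1 ?S0 ?(dcombN, dcombD); apply: eq_dcomb => m k.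
case: m => [|[|[|[|[|m]]]]] // _;
  by rewrite /slot /= /ascent ?nth_tswap // ?(sw_ij1, sw_ij, sw_ji1, sw_ji); ring.
Qed.

Lemma twist_braid_transfer v i : (0 < i)%N -> (i.+1 < n)%N ->
  (forall j, (0 < j < n)%N -> g j * g j = diage (tie j) * g j + 1) ->
  twist v i * twist v i.+1 * twist v i - twist v i.+1 * twist v i * twist v i.+1 =
  g i * (g i.+1 * g i) - g i.+1 * (g i * g i.+1).
Proof.
move=> i_gt0 lt_i1n g_sq.
have lt_i : (0 < i < n)%N by lia.
have lt_i1 : (0 < i.+1 < n)%N by lia.
have g_sq_mul j X : (0 < j < n)%N -> g j * (g j * X) = diage (tie j) * (g j * X) + X.
  by move=> lt_j; rewrite mulrA g_sq // mulrDl mul1r mulrA.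
have sw_i_lo : swap_index i i.-1 = i := swap_index_lo i.
have sw_i_hi : swap_index i i = i.-1 := swap_index_hi i_gt0.
have sw_i_out : swap_index i i.+1 = i.+1 by apply: swap_index_out; lia.
have sw_i1_lo : swap_index i.+1 i = i.+1 := swap_index_lo i.+1.
have sw_i1_hi : swap_index i.+1 i.+1 = i := swap_index_hi (ltn0Sn i).
have sw_i1_out : swap_index i.+1 i.-1 = i.-1 by apply: swap_index_out; lia.
pose ws := [:: 1; g i; g i.+1; g i * g i.+1; g i.+1 * g i;
               g i * (g i.+1 * g i); g i.+1 * (g i * g i.+1)].
have S0 f : diage f = dcomb e ws (slot 0 f) by rewrite -dcomb_slot ?mulr1.
have S1 f : diage f * g i = dcomb e ws (slot 1 f) := dcomb_slot e ws 1 f isT.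
have S2 f : diage f * g i.+1 = dcomb e ws (slot 2 f) := dcomb_slot e ws 2 f isT.
have S3 f : diage f * (g i * g i.+1) = dcomb e ws (slot 3 f) := dcomb_slot e ws 3 f isT.
have S4 f : diage f * (g i.+1 * g i) = dcomb e ws (slot 4 f) := dcomb_slot e ws 4 f isT.
have S5 f : diage f * (g i * (g i.+1 * g i)) = dcomb e ws (slot 5 f) :=
  dcomb_slot e ws 5 f isT.
have S6 f : diage f * (g i.+1 * (g i * g i.+1)) = dcomb e ws (slot 6 f) :=
  dcomb_slot e ws 6 f isT.
have P1 : g i = dcomb e ws (slot 1 (fun=> 1)) := dcomb_slot1 sum_e ws 1 isT.
have P2 : g i.+1 = dcomb e ws (slot 2 (fun=> 1)) := dcomb_slot1 sum_e ws 2 isT.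
have P3 : g i * g i.+1 = dcomb e ws (slot 3 (fun=> 1)) := dcomb_slot1 sum_e ws 3 isT.
have P4 : g i.+1 * g i = dcomb e ws (slot 4 (fun=> 1)) := dcomb_slot1 sum_e ws 4 isT.
have P5 : g i * (g i.+1 * g i) = dcomb e ws (slot 5 (fun=> 1)) :=
  dcomb_slot1 sum_e ws 5 isT.
have P6 : g i.+1 * (g i * g i.+1) = dcomb e ws (slot 6 (fun=> 1)) :=
  dcomb_slot1 sum_e ws 6 isT.
rewrite /twist.
rewrite ?(mulrDl, mulrDr, mulrBl, mulrBr, mulNr, mulrN, opprK, mulr1, mul1r,
          (esym (mulrA _ _ _)), g_diag_mul _ _ lt_i, g_diag _ lt_i,
          g_diag_mul _ _ lt_i1, g_diag _ lt_i1, g_sq_mul _ _ lt_i, g_sq _ lt_i,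
          g_sq_mul _ _ lt_i1, g_sq _ lt_i1, (diagM e_mul), diag_diag_mul).
rewrite ?S6 ?S5 ?S4 ?S3 ?S2 ?S1 ?P6 ?P5 ?P4 ?P3 ?P2 ?P1 ?S0 ?(dcombN, dcombD).
apply: eq_dcomb => m k.
case: m => [|[|[|[|[|[|[|m]]]]]]] // _;
  rewrite /slot /= /tie /ascent ?nth_tswap //
    ?(sw_i_lo, sw_i_hi, sw_i_out, sw_i1_lo, sw_i1_hi, sw_i1_out) /= ?(eq_perm_val v);
  move: (nat_of_ord (v (entry k i.-1))) (nat_of_ord (v (entry k i)))
        (nat_of_ord (v (entry k i.+1))) => x1 x2 x3;
  case: (ltngtP x1 x2) => ?; case: (ltngtP x2 x3) => ?; case: (ltngtP x1 x3) => ? /=;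
  try (exfalso; lia); ring.
Qed.

End TwistedGenerators.

Arguments twist_quadratic_transfer {R A n r' c e g}.
Arguments twist_comm_transfer {R A n r' c e g}.
Arguments twist_braid_transfer {R A n r' c e g}.
Arguments twist_mul_diag {R A n r' c e g}.

Section ShojiAlgebra.
Variables (R : idomainType) (n' r' : nat) (q : R) (u : 'I_r'.+1 -> R)
  (F : 'I_r'.+1 -> {poly R}) (A : algType R) (t T : nat -> A).
Local Notation n := n'.+1.
Local Notation r := r'.+1.
Local Notation K := (n.-tuple 'I_r).
Local Notation entry k p := (nth ord0 k p).
Local Notation b := (@bk R n r u A t).
Local Notation g := (gi n q u t T).
Local Notation c := (q - q^-1).
Hypotheses (q_unit : q \is a GRing.unit) (Delta_unit : Delta u \is a GRing.unit)
  (F_node : forall c c', (F c).[u c'] = (c == c')%:R * Delta u)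
  (rel : shoji_rel n q u F t T).

Let u_diff_unit := Delta_unit_diff Delta_unit.

Lemma comm_t i j : (1 <= i <= n)%N -> (1 <= j <= n)%N -> GRing.comm (t i) (t j).
Proof. by case: rel => _ [_ [_ [_ [tt _]]]] lt_i lt_j; rewrite /GRing.comm tt. Qed.

Lemma bk_spectral (k : K) : b k = \prod_(p < n) spectral_idem u (t p.+1) (entry k p).
Proof.
apply: eq_bigr => p _; rewrite /spectral_idem rmorph_prod (tnth_nth ord0).
apply: eq_bigr => j _.
by rewrite -mul_polyC rmorphM rmorphB /= horner_algX !horner_algC mulr_algl.
Qed.

Lemma t_bk i (k : K) : (1 <= i <= n)%N -> t i * b k = u (entry k i.-1) *: b k.
Proof.
case/andP=> i_gt0 le_in; have lt_in : (i.-1 < n)%N by rewrite prednK.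
rewrite bk_spectral; apply: (mul_prod_eigen (j := Ordinal lt_in)).
- exact: mem_index_enum.
- by move=> p; apply/comm_horner_alg/comm_t; rewrite ?i_gt0 ?ltn_ord.
case: rel => _ [t_split _]; rewrite /= prednK //.
by apply: mul_spectral_idem => //; apply: t_split; rewrite i_gt0.
Qed.

Lemma comm_t_bk i (k : K) : (1 <= i <= n)%N -> GRing.comm (t i) (b k).
Proof.
move=> lt_i; rewrite bk_spectral; apply: commr_prod => p _.
by apply/comm_horner_alg/comm_t; rewrite ?ltn_ord.
Qed.

Lemma bk_t i (k : K) : (1 <= i <= n)%N -> b k * t i = u (entry k i.-1) *: b k.
Proof. by move=> lt_i; rewrite -comm_t_bk // t_bk. Qed.

Lemma bk_mul (k l : K) : b k * b l = (k == l)%:R *: b l.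
Proof.
pose a (p : 'I_n) := (lagrange_poly u (entry k p)).[u (entry l p)].
rewrite {1}bk_spectral (prod_mul_eigen _ (a := a)); last first.
  by move=> p; apply: horner_alg_eigen; rewrite t_bk // ltn_ord.
congr (_ *: _); rewrite {}/a; case: (eqVneq k l) => [<-|kl].
  by rewrite big1 // => p _; rewrite lagrange_poly_node // eqxx.
have [p lt_pn kl_p] := tuple_neq_nth ord0 kl.
by rewrite (bigD1 (Ordinal lt_pn)) //= lagrange_poly_node // (negbTE kl_p) mul0r.
Qed.

Lemma sum_bk : \sum_(k : K) b k = 1.
Proof.
have -> : 1 = \prod_(p < n) \sum_a spectral_idem u (t p.+1) a.
  case: rel => _ [t_split _].
  by rewrite big1 // => p _; rewrite sum_spectral_idem // t_split // ltn_ord.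
rewrite bigA_distr_bigA /= (reindex (fun k : K => [ffun p => tnth k p])); last first.
  exists (fun f : {ffun 'I_n -> 'I_r} => [tuple f p | p < n]) => [k _|f _].
    by apply: eq_from_tnth => p; rewrite tnth_mktuple ffunE.
  by apply/ffunP => p; rewrite !ffunE tnth_mktuple.
apply: eq_bigr => k _; rewrite bk_spectral.
by apply: eq_bigr => p _; rewrite ffunE (tnth_nth ord0).
Qed.

Local Notation diagb := (diag b).

Lemma t_diag i : (1 <= i <= n)%N -> t i = diagb (fun k : K => u (entry k i.-1)).
Proof.
by move=> lt_i; rewrite -[t i]mulr1 -sum_bk mulr_sumr; apply: eq_bigr => k _; apply: t_bk.
Qed.

Lemma corr_node (x y : 'I_r) :
  \sum_(c1 < r) \sum_(c2 < r | (c1 < c2)%N)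
     (Delta u ^- 2 * (u c2 - u c1) * c) * ((F c1).[u x] * (F c2).[u y])
  = (x < y)%:R * ((u y - u x) * c).
Proof.
have DD : Delta u ^- 2 * (Delta u * Delta u) = 1 by rewrite -expr2 mulVr // unitrX.
rewrite (bigD1 x) //= [X in _ + X]big1 ?addr0 => [|c1 c1x]; last first.
  by apply: big1 => c2 _; rewrite !F_node (negbTE c1x) !mul0r mulr0.
case: (ltnP x y) => [lt_xy|le_yx]; last first.
  rewrite big1 ?mul0r // => c2 lt_xc2; rewrite !F_node.
  case: (eqVneq c2 y) => [eq_c2y|_]; last by rewrite mul0r !mulr0.
  by rewrite eq_c2y ltnNge le_yx in lt_xc2.
rewrite (bigD1 y) //= [X in _ + X]big1 ?addr0 => [|c2 /andP[_ c2y]]; last first.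
  by rewrite !F_node (negbTE c2y) !mul0r !mulr0.
rewrite !F_node !eqxx mul1r.
transitivity ((Delta u ^- 2 * (Delta u * Delta u)) * ((u y - u x) * c)); first by ring.
by rewrite DD mul1r.
Qed.

Lemma corr_diag (X Y : K -> 'I_r) :
  corr q u F (diagb (fun k => u (X k))) (diagb (fun k => u (Y k))) =
  diagb (fun k => (X k < Y k)%:R * ((u (Y k) - u (X k)) * c)).
Proof.
rewrite /corr; under eq_bigr => c1 _ do under eq_bigr => c2 _ do
  rewrite !peval_horner_alg !(horner_alg_diag bk_mul sum_bk) (diagM bk_mul) diagZ.
under eq_bigr => c1 _ do rewrite diag_sum.
by rewrite diag_sum; apply: eq_diag => k; apply: corr_node.
Qed.

Lemma Bp_diag j : Bp n q u t j j.+1 = diagb (fun k : K => - c * (entry k j.-1 < entry k j)%:R).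
Proof.
have kv_entry (k : K) i : kv k i = entry k i.-1.
  rewrite /kv; case: (ltnP i.-1 n) => [lt_in|le_ni]; first by rewrite (nth_map ord0) ?size_tuple.
  by rewrite !nth_default ?size_map ?size_tuple.
rewrite /Bp big_mkcond scaler_sumr; apply: eq_bigr => k _ /=.
rewrite !kv_entry /=; case: ifP => _; first by rewrite mulr1.
by rewrite mulr0 scale0r scaler0.
Qed.

Definition corr_coef j (k : K) : R :=
  (entry k j.-1 < entry k j)%:R * ((u (entry k j) - u (entry k j.-1)) * c).

Lemma corr_t j : (0 < j < n)%N -> corr q u F (t j) (t j.+1) = diagb (corr_coef j).
Proof. by move=> lt_j; rewrite !t_diag ?corr_diag //; lia. Qed.

Lemma bk_mul_t_bk (l k : K) x m : (1 <= m <= n)%N ->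
  b l * (x * t m) * b k = u (entry k m.-1) *: (b l * x * b k).
Proof. by move=> lt_m; rewrite -!mulrA t_bk // !scalerAr. Qed.

Lemma bk_t_mul_bk (l k : K) x m : (1 <= m <= n)%N ->
  b l * (t m * x) * b k = u (entry l m.-1) *: (b l * x * b k).
Proof. by move=> lt_m; rewrite !mulrA bk_t // -!scalerAl. Qed.

Lemma bk_diag_bk (l k : K) (f : K -> R) : b l * diagb f * b k = (l == k)%:R *: (f k *: b k).
Proof.
rewrite (idem_mul_diag bk_mul) -scalerAl bk_mul.
by case: eqVneq => [->|_]; rewrite ?scale1r // !scale0r scaler0.
Qed.

Section BkTBk.
Variables (j : nat) (k l : K).
Hypothesis lt_j : (1 <= j <= n.-1)%N.
Local Notation D := (b l * T j * b k).

Lemma bk_T_bk_out m : (1 <= m <= n)%N -> m != j -> m != j.+1 ->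
  (u (entry k m.-1) - u (entry l m.-1)) *: D = 0.
Proof.
move=> lt_m mj mj1; case: rel => _ [_ [_ [_ [_ [Tt _]]]]].
move: (congr1 (fun x => b l * x * b k) (Tt _ _ lt_j lt_m mj mj1)) => /=.
by rewrite bk_mul_t_bk // bk_t_mul_bk // scalerBl => ->; rewrite subrr.
Qed.

Lemma bk_T_bk_lo :
  (u (entry k j) - u (entry l j.-1)) *: D = (l == k)%:R *: (corr_coef j k *: b k).
Proof.
case: rel => _ [_ [_ [_ [_ [_ Ttcorr]]]]].
have [+ _] := Ttcorr j.+1 ltac:(lia); rewrite corr_t; last by lia.
move/(congr1 (fun x => b l * x * b k)) => /=.
rewrite bk_mul_t_bk; last by lia.
rewrite mulrDr mulrDl bk_t_mul_bk ?bk_diag_bk /=; last by lia.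
by move=> E; rewrite scalerBl E addrAC subrr add0r.
Qed.

Lemma bk_T_bk_hi :
  (u (entry k j.-1) - u (entry l j)) *: D = - ((l == k)%:R *: (corr_coef j k *: b k)).
Proof.
case: rel => _ [_ [_ [_ [_ [_ Ttcorr]]]]].
have [_ +] := Ttcorr j.+1 ltac:(lia); rewrite corr_t; last by lia.
move/(congr1 (fun x => b l * x * b k)) => /=.
rewrite bk_mul_t_bk; last by lia.
rewrite mulrBr mulrBl bk_t_mul_bk ?bk_diag_bk /=; last by lia.
by move=> E; rewrite scalerBl E addrAC subrr add0r.
Qed.

End BkTBk.

(* Each relation between [T j] and some [t m], multiplied by [b l] on the left
   and [b k] on the right, scales [b l * T j * b k] by a difference of two [u]'s,
   a unit unless [l] and [tswap j k] agree at the position involved; for [l = k]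
   the same identity computes [b k * T j * b k], which cancels the [Bp] part. *)
Lemma bk_g_bk j (k l : K) : (0 < j < n)%N -> l != tswap ord0 j k -> b l * g j * b k = 0.
Proof.
move=> lt_j lk; have lt_j' : (1 <= j <= n.-1)%N by lia.
rewrite /gi Bp_diag mulrDr mulrDl bk_diag_bk.
case: (eqVneq l k) => [eq_lk|lk']; last first.
  rewrite scale0r addr0; have [p lt_pn] := tuple_neq_nth ord0 lk.
  rewrite nth_tswap // => /u_diff_unit/scaler_unit_eq0; apply.
  rewrite -opprB scaleNr; apply/eqP; rewrite oppr_eq0; apply/eqP.
  case: (eqVneq p j.-1) => [->|pj].
    by rewrite swap_index_lo bk_T_bk_lo // (negbTE lk') scale0r.
  case: (eqVneq p j) => [->|pj1].
    by rewrite swap_index_hi ?bk_T_bk_hi ?(negbTE lk') ?scale0r ?oppr0 //; lia.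
  by rewrite swap_index_out // -[p]/(p.+1.-1) bk_T_bk_out //; lia.
subst l; have neq_kj : entry k j.-1 != entry k j.
  apply: contraNneq lk => kj; apply/eqP/val_inj/(@eq_from_nth _ ord0) => [|p _].
    by rewrite !size_tuple.
  by rewrite nth_tswap // /swap_index; case: eqP => [->|_]; [|case: eqP => [->|_]].
have -> : b k * T j * b k = ((entry k j.-1 < entry k j)%:R * c) *: b k.
  have ud : u (entry k j) - u (entry k j.-1) \is a GRing.unit by rewrite u_diff_unit // eq_sym.
  apply/eqP; rewrite -subr_eq0; apply/eqP/(scaler_unit_eq0 ud).
  by rewrite scalerBr bk_T_bk_lo // eqxx scale1r /corr_coef !scalerA mulrCA subrr.
by rewrite scale1r -scalerDl mulNr [_ * c]mulrC addrN scale0r.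
Qed.

Lemma g_bk j (k : K) : (0 < j < n)%N -> g j * b k = b (tswap ord0 j k) * g j.
Proof.
move=> lt_j.
have -> : g j * b k = b (tswap ord0 j k) * g j * b k.
  rewrite -[g j * b k]mul1r -sum_bk mulrA !mulr_suml (bigD1 (tswap ord0 j k)) //=.
  by rewrite big1 ?addr0 // => l lk; rewrite bk_g_bk.
rewrite -[RHS]mulr1 -sum_bk mulr_sumr (bigD1 k) //= big1 ?addr0 // => l lk.
apply: bk_g_bk => //; apply: contraNneq lk => kl.
by rewrite -[l](tswapK ord0 lt_j) -kl tswapK.
Qed.

Lemma g_diag j (f : K -> R) : (0 < j < n)%N ->
  g j * diagb f = diagb (fun k => f (tswap ord0 j k)) * g j.
Proof.
move=> lt_j.
rewrite /diag mulr_sumr mulr_suml (reindex_inj (can_inj (tswapK ord0 lt_j))) /=.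
by apply: eq_bigr => k _; rewrite -scalerAr g_bk // tswapK // scalerAl.
Qed.

Definition twist_t (v : {perm 'I_r}) i : A := diagb (fun k => u (v (entry k i.-1))).

Local Notation twist_T := (twist c b g).

Lemma twist_t1 i : (1 <= i <= n)%N -> twist_t 1 i = t i.
Proof. by move=> lt_i; rewrite t_diag //; apply: eq_diag => k; rewrite perm1. Qed.

Lemma twist_T1 j : twist_T 1 j = T j.
Proof.
rewrite /twist /gi Bp_diag -addrA diagD -[RHS]addr0; congr (_ + _).
by rewrite -(diag0 b); apply: eq_diag => k; rewrite /ascent !perm1; ring.
Qed.

Lemma g_sq j : (0 < j < n)%N -> g j * g j = diagb (tie c j) * g j + 1.
Proof.
move=> lt_j; case: rel => T_quadratic _.
move: (T_quadratic j ltac:(lia)).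
rewrite -(twist_T1 j) hecke_quadratic_expand // (twist_quadratic_transfer bk_mul sum_bk g_diag) //.
by move/eqP; rewrite subr_eq add0r subr_eq => /eqP ->; rewrite addrC.
Qed.

Section Twisted.
Variable v : {perm 'I_r}.

Lemma twist_T_quadratic j : (1 <= j <= n.-1)%N ->
  (twist_T v j - q%:A) * (twist_T v j + q^-1%:A) = 0.
Proof.
move=> lt_j; rewrite hecke_quadratic_expand // (twist_quadratic_transfer bk_mul sum_bk g_diag);
  last by lia.
rewrite g_sq; last by lia.
by rewrite addrAC addrK subrr.
Qed.

Lemma twist_t_split i : \prod_(a < r) (twist_t v i - (u a)%:A) = 0.
Proof.
under eq_bigr => a _ do rewrite -(diagC sum_bk) diagN diagD.
rewrite (diag_prod bk_mul sum_bk) -(diag0 b); apply: eq_diag => k.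
by rewrite (bigD1 (v (entry k i.-1))) //= subrr mul0r.
Qed.

Lemma twist_T_braid i : (1 <= i)%N -> (i.+1 <= n.-1)%N ->
  twist_T v i * twist_T v i.+1 * twist_T v i = twist_T v i.+1 * twist_T v i * twist_T v i.+1.
Proof.
move=> i_gt0 lt_i1; case: rel => _ [_ [T_braid _]].
have transfer w := twist_braid_transfer bk_mul sum_bk g_diag w i i_gt0 ltac:(lia) g_sq.
apply/eqP; rewrite -subr_eq0 transfer -(transfer 1%g) !twist_T1 subr_eq0.
exact/eqP/T_braid.
Qed.

Lemma twist_T_comm i j : (1 <= i <= n.-1)%N -> (1 <= j <= n.-1)%N ->
  (i.+1 < j)%N || (j.+1 < i)%N -> twist_T v i * twist_T v j = twist_T v j * twist_T v i.
Proof.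
move=> lt_i lt_j far; case: rel => _ [_ [_ [T_comm _]]].
have transfer w :=
  twist_comm_transfer (c := c) bk_mul sum_bk g_diag w i j ltac:(lia) ltac:(lia) far.
apply/eqP; rewrite -subr_eq0 transfer -(transfer 1%g) !twist_T1 subr_eq0.
exact/eqP/T_comm.
Qed.

Lemma twist_T_t_comm j m : (1 <= j <= n.-1)%N -> (1 <= m <= n)%N -> m != j -> m != j.+1 ->
  twist_T v j * twist_t v m = twist_t v m * twist_T v j.
Proof.
move=> lt_j lt_m mj mj1.
have sw_m (k : K) : entry (tswap ord0 j k) m.-1 = entry k m.-1.
  by rewrite nth_tswap ?swap_index_out //; lia.
rewrite /twist_t (twist_mul_diag bk_mul g_diag); last by lia.
rewrite -[RHS]addr0 -(diag0 b); congr (_ * _ + _); apply: eq_diag => k.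
  by rewrite sw_m.
by rewrite sw_m subrr mulr0.
Qed.

Lemma twist_T_t_corr j : (2 <= j.+1 <= n)%N ->
  let C := corr q u F (twist_t v j) (twist_t v j.+1) in
  twist_T v j * twist_t v j.+1 = twist_t v j * twist_T v j + C /\
  twist_T v j * twist_t v j = twist_t v j.+1 * twist_T v j - C.
Proof.
move=> lt_j C; have lt_j' : (0 < j < n)%N by lia.
rewrite {}/C /twist_t !(twist_mul_diag bk_mul g_diag) // corr_diag diagN.
have sw_lo (k : K) : entry (tswap ord0 j k) j.-1 = entry k j by rewrite nth_tswap // swap_index_lo.
have sw_hi (k : K) : entry (tswap ord0 j k) j = entry k j.-1.
  by rewrite nth_tswap // swap_index_hi //; lia.
split; congr (_ * _ + _); apply: eq_diag => k; rewrite /= ?sw_lo ?sw_hi //;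
  by rewrite /ascent; case: ltnP => _ /=; ring.
Qed.

Lemma shoji_rel_twist : shoji_rel n q u F (twist_t v) (twist_T v).
Proof.
split; first exact: twist_T_quadratic.
split; first by move=> i _; apply: twist_t_split.
split; first exact: twist_T_braid.
split; first exact: twist_T_comm.
split.
  by move=> i j _ _; rewrite /twist_t !(diagM bk_mul); apply: eq_diag => k; rewrite mulrC.
split; first exact: twist_T_t_comm.
by move=> j lt_j; have := twist_T_t_corr (j := j.-1); rewrite prednK; [apply|lia].
Qed.

End Twisted.

Lemma entry_map (w : {perm 'I_r}) (k : K) p : (p < n)%N -> entry (map_tuple w k) p = w (entry k p).
Proof. by move=> lt_p; rewrite /= (nth_map ord0) // size_tuple. Qed.

Lemma map_tuple_permKV (w : {perm 'I_r}) : cancel (fun k : K => map_tuple (w^-1)%g k) (map_tuple w).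
Proof. by move=> k; apply: eq_from_tnth => p; rewrite !tnth_map permKV. Qed.

Lemma ascent_map (w w' : {perm 'I_r}) j (k : K) : (0 < j < n)%N ->
  ascent w' j (map_tuple w k) = ascent (w * w') j k.
Proof. by move=> lt_j; rewrite /ascent !entry_map ?permM //; lia. Qed.

Section Relabelling.
Variables (w : {perm 'I_r}) (f : {lrmorphism A -> A}).
Hypotheses (f_t : forall i, (1 <= i <= n)%N -> f (t i) = twist_t w i)
           (f_T : forall j, (1 <= j <= n.-1)%N -> f (T j) = twist_T w j).

Lemma relabel_bk (k : K) : f (b k) = b (map_tuple (w^-1)%g k).
Proof.
rewrite bk_spectral (big_morph f (rmorphM f) (rmorph1 f)).
under eq_bigr => p _ do rewrite /spectral_idem lrmorph_horner_alg f_t ?ltn_ord //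
  /twist_t (horner_alg_diag bk_mul sum_bk).
rewrite (diag_prod bk_mul sum_bk) -diag_idem; apply: eq_diag => l /=.
under eq_bigr => p _ do rewrite lagrange_poly_node //.
case: (eqVneq l (map_tuple (w^-1)%g k)) => [->|lk].
  by rewrite big1 // => p _; rewrite entry_map // permKV eqxx.
have [p lt_pn] := tuple_neq_nth ord0 lk; rewrite entry_map // => lk_p.
rewrite (bigD1 (Ordinal lt_pn)) //= (_ : _ == _ = false) ?mul0r //.
by apply: contraNF lk_p => /eqP ->; rewrite permK.
Qed.

Lemma relabel_diag (a : K -> R) : f (diagb a) = diagb (fun k => a (map_tuple w k)).
Proof.
rewrite /diag linear_sum [RHS](reindex_inj (can_inj (map_tuple_permKV w))) /=.
by apply: eq_bigr => k _; rewrite linearZ /= relabel_bk map_tuple_permKV.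
Qed.

Lemma relabel_twist_t w' i : (1 <= i <= n)%N -> f (twist_t w' i) = twist_t (w * w') i.
Proof.
by move=> lt_i; rewrite relabel_diag; apply: eq_diag => k; rewrite entry_map ?permM //; lia.
Qed.

Lemma relabel_g j : (0 < j < n)%N -> f (g j) = g j.
Proof.
move=> lt_j; have g_T : g j = T j - diagb (fun k => c * (ascent 1 j k)%:R).
  by rewrite -(twist_T1 j) /twist addrK.
rewrite {1}g_T rmorphB /= f_T ?relabel_diag; last by lia.
rewrite (@eq_diag _ _ _ b _ (fun k => c * (ascent w j k)%:R)) => [|k].
  by rewrite /twist addrK.
by rewrite ascent_map // mulg1.
Qed.

Lemma relabel_twist_T w' j : (0 < j < n)%N -> f (twist_T w' j) = twist_T (w * w') j.
Proof.
move=> lt_j; rewrite /twist rmorphD /= relabel_g // relabel_diag.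
by congr (_ + _); apply: eq_diag => k; rewrite ascent_map.
Qed.

End Relabelling.

Section Action.
Hypothesis univ : shoji_universal n q u F t T.

Definition relabels (sigma : {perm 'I_r}) (f : {lrmorphism A -> A}) : Prop :=
  (forall i, (1 <= i <= n)%N -> f (t i) = twist_t sigma^-1 i) /\
  (forall j, (1 <= j <= n.-1)%N -> f (T j) = twist_T sigma^-1 j).

Lemma exists_relabelling sigma :
  exists f, relabels sigma f /\ forall f', relabels sigma f' -> f' =1 f.
Proof.
have [f [f_t f_T uniq]] := univ.2 _ _ _ (shoji_rel_twist sigma^-1).
by exists f; split => // f' [f'_t f'_T]; apply: uniq.
Qed.

Definition relabelling sigma : {lrmorphism A -> A} :=
  proj1_sig (constructive_indefinite_description _ (exists_relabelling sigma)).

Lemma relabellingP sigma :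
  relabels sigma (relabelling sigma) /\ forall f', relabels sigma f' -> f' =1 relabelling sigma.
Proof. exact: proj2_sig (constructive_indefinite_description _ (exists_relabelling sigma)). Qed.

Lemma relabellingM sigma tau :
  relabelling (sigma * tau)%g =1 relabelling tau \o relabelling sigma.
Proof.
move=> x; have [_ uniq] := relabellingP (sigma * tau)%g; symmetry; apply: uniq.
have [[f_t f_T] _] := relabellingP sigma; have [[f'_t f'_T] _] := relabellingP tau.
split=> [i lt_i | j lt_j] /=; rewrite invMg.
  by rewrite f_t // (relabel_twist_t f'_t).
by rewrite f_T // (relabel_twist_T f'_t f'_T) //; lia.
Qed.

Lemma relabelling1 : relabelling 1%g =1 id.
Proof.
move=> x; have [_ uniq] := relabellingP 1%g; symmetry; apply: (uniq idfun).
by split=> [i lt_i | j lt_j] /=; rewrite invg1 ?twist_t1 ?twist_T1.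
Qed.

Lemma relabelling_bij sigma : bijective (relabelling sigma).
Proof.
exists (relabelling sigma^-1%g) => x.
  by rewrite -[RHS]relabelling1 -(mulgV sigma) relabellingM.
by rewrite -[RHS]relabelling1 -(mulVg sigma) relabellingM.
Qed.

Lemma relabelling_bk_gword sigma (k : K) s : all (fun i => 0 < i < n)%N s ->
  relabelling sigma (b k * gword n q u t T s) = b (map_tuple sigma k) * gword n q u t T s.
Proof.
move=> s_ok; have [[f_t f_T] _] := relabellingP sigma.
have f_mul x y : relabelling sigma (x * y) = relabelling sigma x * relabelling sigma y :=
  rmorphM _ x y.
rewrite f_mul (relabel_bk f_t) invgK; congr (_ * _).
rewrite (big_morph _ f_mul (rmorph1 _)); apply: eq_big_seq => i s_i.
by rewrite (relabel_g f_t f_T) //; apply: (allP s_ok).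
Qed.

End Action.

End ShojiAlgebra.

Theorem proposition5p1 (R : idomainType) (n r : nat) (q : R) (u : 'I_r -> R)
    (F : 'I_r -> {poly R}) (A : algType R) (t T : nat -> A) :
  (0 < n)%N -> (0 < r)%N ->
  q \is a GRing.unit -> Delta u \is a GRing.unit ->
  (forall c, (size (F c) <= r)%N) ->
  (forall c c', (F c).[u c'] = (c == c')%:R * Delta u) ->
  shoji_universal n q u F t T ->
  exists phi : 'S_r -> {lrmorphism A -> A},
    [/\ forall sigma, bijective (phi sigma),
        forall sigma (k : n.-tuple 'I_r) (w : 'S_n) (s : seq nat),
          reduced_expr s w ->
          phi sigma (bk u t k * gword n q u t T s)
            = bk u t (map_tuple sigma k) * gword n q u t T s,
        phi 1%g =1 id &
        forall sigma tau, phi (sigma * tau)%g =1 phi tau \o phi sigma].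
Proof.
case: n => // n'; case: r u F => // r' u F _ _ q_unit Delta_unit _ F_node univ.
have rel := univ.1.
exists (relabelling q_unit Delta_unit F_node rel univ); split.
- exact: relabelling_bij.
- by move=> sigma k w s [[s_ok _] _]; apply: relabelling_bk_gword.
- exact: relabelling1.
- exact: relabellingM.
Qed.
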